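(* Let $\ell \in \mathbb{N}$, and let $\mathcal{P}$ be a hereditary property of ordered graphs. Suppose that for arbitrarily large values of $k$ some ordered graph in $\mathcal{P}$ contains a $(k,\ell)$-structure of Type 3. Then $|\mathcal{P}_n| \geqslant F_{n,\ell+1}$ for every $n \in \mathbb{N}$.
   Context: Ordered graphs of order $n$ have vertex set $[n]$ with the natural order; a hereditary property is a collection of ordered graphs closed under order-preserving isomorphism and induced ordered subgraphs; $\mathcal{P}_n$ is the set of members with vertex set $[n]$. A $(k,\ell)$-structure of Type 3 in $G$ consists of vertices $x_1<z_{1,1}<\dots<z_{1,\ell-1}<y_1<x_2<z_{2,1}<\dots<z_{2,\ell-1}<y_2<x_3<\dots<y_{2k-1}<x_{2k}<z_{2k,1}<\dots<z_{2k,\ell-1}<y_{2k}$ such that for $1\leqslant i<2k$, $x_iy_i\in E(G)$ iff $x_{i+1}y_{i+1}\notin E(G)$. $F_{n,k}$: $F_{n,k}=0$ for $n<0$, $F_{0,k}=1$, $F_{n,k}=F_{n-1,k}+\dots+F_{n-k,k}$ for $n\geqslant1$. *)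

From mathcomp Require Import all_boot.
Set Implicit Arguments. Unset Strict Implicit. Unset Printing Implicit Defensive.

(* An ordered graph on vertex set [n] = {0,..,n-1} (natural order) is given by
   its edge set, a set of pairs (i,j) with i < j. *)
Definition ograph (n : nat) := {set 'I_n * 'I_n}.

Definition wf_ograph n (G : ograph n) : bool :=
  [forall p in G, (p.1 < p.2)%N].

Definition adjn n (G : ograph n) (u v : nat) : bool :=
  [exists p in G, ((p.1 == u :> nat) && (p.2 == v :> nat))
                  || ((p.1 == v :> nat) && (p.2 == u :> nat))].

(* a property of ordered graphs: for each n, a predicate on graphs on [n]
   (only well-formed graphs are considered). *)
Definition oproperty := forall n : nat, pred (ograph n).

Definition induced n m (G : ograph n) (f : 'I_m -> 'I_n) : ograph m :=
  [set p : 'I_m * 'I_m | (p.1 < p.2)%N && ((f p.1, f p.2) \in G)].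

Definition strictly_increasing n m (f : 'I_m -> 'I_n) : Prop :=
  forall i j : 'I_m, (i < j)%N -> (f i < f j)%N.

(* hereditary: closed under induced ordered subgraphs (closure under
   order-preserving isomorphism is automatic: the only order isomorphism
   [n] -> [n] is the identity). *)
Definition hereditary (P : oproperty) : Prop :=
  forall n m (G : ograph n) (f : 'I_m -> 'I_n),
    wf_ograph G -> P n G -> strictly_increasing f -> P m (induced G f).

(* (k,l)-structure of Type 3: vertices g 0 < g 1 < ... < g (2k*b - 1) where
   each block of b = max(2, l+1) consecutive vertices is
   x_i < z_{i,1} < ... < z_{i,l-1} < y_i, so x_i = g(i*b), y_i = g(i*b+b-1)
   (0-indexed blocks i = 0..2k-1). *)
Definition blk (l : nat) := maxn 2 l.+1.

Definition type3_structure n (G : ograph n) (k l : nat) : Prop :=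
  exists g : nat -> nat,
    (forall j, (j.+1 < 2 * k * blk l)%N -> (g j < g j.+1)%N) /\
    (forall j, (j < 2 * k * blk l)%N -> (g j < n)%N) /\
    (forall i, (i.+1 < 2 * k)%N ->
       adjn G (g (i * blk l)) (g (i * blk l + blk l - 1))
       = ~~ adjn G (g (i.+1 * blk l)) (g (i.+1 * blk l + blk l - 1))).

(* F_{n,k}: F_{n,k} = 0 for n<0, F_{0,k} = 1, F_{n,k} = F_{n-1,k}+...+F_{n-k,k}.
   Flist k n = [:: F_{n,k}; F_{n-1,k}; ...; F_{0,k}]. *)
Fixpoint Flist (k n : nat) : seq nat :=
  match n with
  | 0 => [:: 1]
  | n'.+1 => let s := Flist k n' in sumn (take k s) :: s
  end.

Definition F (n k : nat) : nat := head 0 (Flist k n).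

(* Call the adjacency of a pair of vertices its colour, and group the blocks
   of a Type 3 structure in consecutive pairs, so that the two halves of each
   double block have ends x, y of different colours.  A greedy Ramsey argument
   over a long sequence of double blocks selects 3n of them, followed by a last
   block containing a vertex z, such that every vertex sees all later selected
   blocks in one colour.  If n-1 selected blocks are mixed towards z, each
   offers two vertices that z tells apart, and the 2^(n-1) choices give distinct
   induced subgraphs.  Otherwise n selected blocks see z in one colour c, so all
   pairs from different blocks have colour c, and each block has a half whose
   ends have colour ~~c.  Place the parts of a composition of n into parts of
   size at most b = max(2, l+1) into these halves, with the first and last
   vertex of each part at the ends: a part starts at vertex i exactly when every
   pair separated by i has colour c, so the F_{n,b} >= F_{n,l+1} compositions
   give distinct induced subgraphs. *)

From Stdlib Require Import IndefiniteDescription.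
From mathcomp Require Import all_boot zify.
Set Implicit Arguments. Unset Strict Implicit. Unset Printing Implicit Defensive.

(** * Induced ordered subgraphs *)

Lemma adjnC n (G : ograph n) u v : adjn G u v = adjn G v u.
Proof.
by apply/existsP/existsP => -[p /andP[pG e]]; exists p; rewrite pG orbC.
Qed.

Lemma adjn_wf n (G : ograph n) (a b : 'I_n) :
  wf_ograph G -> a < b -> adjn G a b = ((a, b) \in G).
Proof.
move=> /forallP wfG ab; apply/existsP/idP => [[[u v] /= /andP[uvG]]|abG]; last first.
  by exists (a, b); rewrite abG !eqxx.
have := wfG (u, v); rewrite uvG /= => uv.
case/orP=> /andP[/eqP ua /eqP vb]; last lia.
by rewrite (val_inj ua) (val_inj vb) in uvG.
Qed.

Definition increasing_on n (v : nat -> nat) :=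
  forall i j, i < j -> j < n -> v i < v j.

Lemma increasing_onS n v :
  (forall i, i.+1 < n -> v i < v i.+1) -> increasing_on n v.
Proof.
move=> vS i j ij; rewrite -(subnKC ij); elim: (j - i.+1) => [|d IH] jn.
  by rewrite addn0 in jn *; apply: vS.
by rewrite addnS in jn *; apply: ltn_trans (IH (ltnW jn)) (vS _ jn).
Qed.

Definition members (P : oproperty) n := [set G : ograph n | wf_ograph G && P n G].

Definition induced_by N (G : ograph N) n (v : nat -> nat) : ograph n :=
  [set p : 'I_n * 'I_n | (p.1 < p.2) && adjn G (v p.1) (v p.2)].

Lemma wf_induced_by N (G : ograph N) n v : wf_ograph (induced_by G n v).
Proof. by apply/forallP => p; apply/implyP; rewrite inE => /andP[]. Qed.

Lemma adjn_induced_by N (G : ograph N) n v (a b : 'I_n) :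
  adjn (induced_by G n v) a b = (a != b) && adjn G (v a) (v b).
Proof.
wlog ab : a b / a <= b.
  move=> sym; case: (leqP a b) => [|/ltnW] ?; first exact: sym.
  by rewrite adjnC sym // eq_sym adjnC.
case: (ltngtP a b) ab => // [lt_ab|/val_inj <-] _.
  by rewrite adjn_wf ?wf_induced_by // inE lt_ab -val_eqE /= neq_ltn lt_ab.
rewrite eqxx; apply/existsP => -[p /andP[]]; rewrite inE => /andP[lt_p _].
by case/orP=> /andP[/eqP p1 /eqP p2]; move: lt_p; rewrite p1 p2 ltnn.
Qed.

Lemma induced_by_members (P : oproperty) N (G : ograph N) n v :
  hereditary P -> wf_ograph G -> P N G ->
  increasing_on n v -> (forall i, i < n -> v i < N) ->
  induced_by G n v \in members P n.
Proof.
move=> hP wfG PG v_inc v_lt.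
pose f (i : 'I_n) : 'I_N := Ordinal (v_lt i (ltn_ord i)).
have f_inc : strictly_increasing f by move=> i j ij; apply: v_inc.
rewrite inE wf_induced_by /=.
have -> : induced_by G n v = induced G f.
  apply/setP => -[a b]; rewrite !inE /=.
  by case ab: (a < b) => //=; rewrite (adjn_wf wfG (f_inc _ _ ab)).
exact: hP.
Qed.

(** * The numbers F *)

Lemma map_iota1 (T : Type) (f : nat -> T) m :
  [seq f i | i <- iota 1 m] = [seq f i.+1 | i <- iota 0 m].
Proof. by rewrite -(addn0 1) iotaDl -map_comp. Qed.

Lemma Flist_iota k n : Flist k n = [seq F (n - i) k | i <- iota 0 n.+1].
Proof.
elim: n => [|n IHn] //; rewrite -[iota 0 n.+2]/(0 :: iota 1 n.+1) map_cons map_iota1 /= subn0.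
by congr (_ :: _); rewrite IHn; apply: eq_map => i /=; rewrite subSS.
Qed.

Lemma F_rec k n : F n.+1 k = sumn [seq F (n - i) k | i <- iota 0 (minn k n.+1)].
Proof. by rewrite {1}/F /= Flist_iota -map_take take_iota. Qed.

Lemma F_gt0 k n : 0 < k -> 0 < F n k.
Proof.
move=> k_gt0; elim: n => [|n IHn] //; rewrite F_rec.
have : 0 < minn k n.+1 by rewrite leq_min k_gt0.
by case: (minn k n.+1) => //= m _; rewrite subn0 ltn_addr.
Qed.

Lemma F_le_exp2 k n : F n k <= 2 ^ n.-1.
Proof.
(* [S m] bounds [F m.+1 k] and at most doubles at each step. *)
pose S m := sumn [seq F (m - i) k | i <- iota 0 m.+1].
have FS m : F m.+1 k <= S m.
  rewrite F_rec /S; set j := minn k m.+1.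
  rewrite -(subnKC (geq_minr k m.+1) : j + _ = m.+1).
  by rewrite iotaD map_cat sumn_cat leq_addr.
case: n => [|n] //=; apply: leq_trans (FS n) _.
elim: n => [|m IHm]; first by rewrite /S /= addn0.
have -> : S m.+1 = F m.+1 k + S m.
  by rewrite /S -[iota 0 m.+2]/(0 :: iota 1 m.+1) map_cons map_iota1 /= subn0.
by rewrite expnS mul2n -addnn leq_add // (leq_trans (FS m)).
Qed.

Lemma F_le_blk l n : F n l.+1 <= F n (blk l).
Proof.
case: l => [|l]; last by rewrite /blk (maxn_idPr _).
suff -> : F n 1 = 1 by apply: F_gt0.
by elim: n => [|n IHn] //; rewrite F_rec (minn_idPl _) //= subn0 IHn.
Qed.

(** * Compositions *)

Lemma uniq_flatten_map (T : eqType) (I : seq nat) (f : nat -> seq T) :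
  uniq I -> {in I, forall i, uniq (f i)} ->
  {in I &, forall i j, i < j -> forall x, x \in f i -> x \notin f j} ->
  uniq (flatten (map f I)).
Proof.
elim: I => //= i I IH /andP[iI uI] uf disj.
rewrite cat_uniq uf ?mem_head //= IH //; first last.
- by move=> j k jI kI; apply: disj; rewrite inE ?jI ?kI orbT.
- by move=> j jI; apply: uf; rewrite inE jI orbT.
rewrite andbT; apply/hasPn => x /flatten_mapP[j jI xj]; apply/negP => xi.
have jI' : j \in i :: I by rewrite inE jI orbT.
case: (ltngtP i j) => [ij|ji|eij]; last by rewrite eij jI in iI.
- by move: (disj i j (mem_head _ _) jI' ij x xi); rewrite xj.
- by move: (disj j i jI' (mem_head _ _) ji x xj); rewrite xi.
Qed.

(* A code of length [n] encodes a composition of [n] into parts of size at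
   most [b], each part in its own block: [x.1] flags the first vertex of each
   part, and the [t]-th vertex of a part of size [i.+1] goes to position
   [part_pos b i t] of its block.  The first and last vertices of a part thus go
   to positions [0] and [b.-1], where the ends x, y of a Type 3 block sit. *)
Definition code := (seq bool * seq (nat * nat))%type.

Definition part_pos b i t := if t == 0 then 0 else if t == i then b.-1 else t.

Definition part_starts i : seq bool := mkseq (fun t => t == 0) i.+1.

Definition part_labels b r i : seq (nat * nat) := mkseq (fun t => (r, part_pos b i t)) i.+1.

Definition code_cons b r i (x : code) : code :=
  (part_starts i ++ x.1, part_labels b r i ++ x.2).

Fixpoint codes b fuel n r : seq code :=
  if n is 0 then [:: ([::], [::])] else
  if fuel is fuel'.+1 then
    flatten [seq [seq code_cons b r i x | x <- codes b fuel' (n - i.+1) r.+1]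
            | i <- iota 0 (minn b n)]
  else [::].

Lemma codesS b fuel n r : codes b fuel.+1 n.+1 r =
  flatten [seq [seq code_cons b r i x | x <- codes b fuel (n - i) r.+1]
          | i <- iota 0 (minn b n.+1)].
Proof. by []. Qed.

Definition cstart (x : code) i := nth false x.1 i.
Definition cblock (x : code) i := (nth (0, 0) x.2 i).1.
Definition cpos (x : code) i := (nth (0, 0) x.2 i).2.

Definition code_ok b r n (x : code) :=
  [/\ size x.1 = n,
      forall i, i < n -> r <= cblock x i < r + n /\ cpos x i < b,
      forall i, i.+1 < n -> if cstart x i.+1 then is_true (cblock x i < cblock x i.+1)
                            else cblock x i = cblock x i.+1 /\ cpos x i < cpos x i.+1,
      forall i, i < n -> ~~ cstart x i -> exists s e,
        [/\ s < i <= e, e < n, cblock x s = cblock x e, cpos x s = 0 & cpos x e = b.-1]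
    & 0 < n -> cstart x 0].

Lemma size_code_cons b r i x : size (code_cons b r i x).1 = i.+1 + size x.1.
Proof. by rewrite size_cat size_mkseq. Qed.

Lemma nth_part_starts i s j :
  nth false (part_starts i ++ s) j = if j <= i then j == 0 else nth false s (j - i.+1).
Proof. by rewrite nth_cat size_mkseq ltnS; case: ifP => // ji; rewrite nth_mkseq. Qed.

Lemma cstart_cons b r i x j :
  cstart (code_cons b r i x) j = if j <= i then j == 0 else cstart x (j - i.+1).
Proof. exact: nth_part_starts. Qed.

Lemma cblock_cons b r i x j :
  cblock (code_cons b r i x) j = if j <= i then r else cblock x (j - i.+1).
Proof. by rewrite /cblock nth_cat size_mkseq ltnS; case: ifP => // ji; rewrite nth_mkseq. Qed.

Lemma cpos_cons b r i x j :
  cpos (code_cons b r i x) j = if j <= i then part_pos b i j else cpos x (j - i.+1).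
Proof. by rewrite /cpos nth_cat size_mkseq ltnS; case: ifP => // ji; rewrite nth_mkseq. Qed.

Section Codes.
Variable b : nat.
Hypothesis b_ge2 : 1 < b.

Lemma part_pos_lt i t : t <= i < b -> part_pos b i t < b.
Proof. by rewrite /part_pos => /andP[? ?]; do ! case: eqP; lia. Qed.

Lemma part_posS i t : t < i < b -> part_pos b i t < part_pos b i t.+1.
Proof. by rewrite /part_pos => /andP[? ?]; do ! case: eqP; lia. Qed.

Lemma codes_ok fuel n r x : n <= fuel -> x \in codes b fuel n r -> code_ok b r n x.
Proof.
elim: fuel n r x => [|fuel IH] [|n] r x // n_le.
- by rewrite inE => /eqP ->; split => // i; rewrite ltn0.
- by rewrite inE => /eqP ->; split => // i; rewrite ltn0.
rewrite codesS => /flatten_mapP[i]; rewrite mem_iota leq_min => /andP[_ /andP[ib in_]].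
move=> /mapP[y /IH[|]]; first lia.
move=> size_y bnd step inner start ->; split.
- by rewrite size_code_cons size_y; lia.
- move=> j jn; rewrite cblock_cons cpos_cons; case: ifP => ji.
    by split; [lia | apply: part_pos_lt; lia].
  by have [] := bnd (j - i.+1) (ltac:(lia)); lia.
- move=> j jn; rewrite cstart_cons !cblock_cons !cpos_cons.
  case: (ltngtP j i) => ji.
  + by split => //; apply: part_posS; lia.
  + by have := step (j - i.+1) (ltac:(lia)); rewrite -subSn.
  + rewrite ji subnn start; last lia.
    by have [] := bnd 0 (ltac:(lia)); lia.
- move=> j jn; rewrite cstart_cons; case: ifP => ji.
    move=> /eqP j0; exists 0, i; rewrite !cblock_cons !cpos_cons leq0n leqnn.
    split; rewrite /part_pos ?eqxx //; first lia.
    by rewrite ifN //; apply/eqP; lia.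
  move=> /(inner (j - i.+1) (ltac:(lia)))[s [e [? ? se s0 eb]]].
  exists (s + i.+1), (e + i.+1); rewrite !cblock_cons !cpos_cons !ifN; [|lia..].
  by rewrite !addnK; split => //; lia.
- by rewrite cstart_cons.
Qed.

Lemma size_codes fuel n r : n <= fuel -> size (codes b fuel n r) = F n b.
Proof.
elim: fuel n r => [|fuel IH] [|n] r // n_le.
rewrite codesS size_flatten /shape -map_comp F_rec.
congr sumn; apply/eq_in_map => i; rewrite mem_iota leq_min => /andP[_ /andP[_ in_]].
by rewrite /= size_map IH //; lia.
Qed.

Lemma uniq_codes_starts fuel n r : n <= fuel -> uniq (map fst (codes b fuel n r)).
Proof.
elim: fuel n r => [|fuel IH] [|n] r // n_le.
rewrite codesS map_flatten -map_comp; apply: uniq_flatten_map; first exact: iota_uniq.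
  move=> i; rewrite mem_iota leq_min => /andP[_ /andP[_ in_]].
  rewrite /= -map_comp (eq_map (_ : fst \o code_cons b r i =1 cat (part_starts i) \o fst)) //.
  rewrite map_comp map_inj_uniq ?IH //; first lia.
  by move=> s1 s2 /(congr1 (drop i.+1)); rewrite !drop_size_cat // size_mkseq.
(* Only the codes whose first part has size [i.+1] start a part at [i.+1]. *)
move=> i j; rewrite !mem_iota !leq_min => /andP[_ /andP[_ in_]] /andP[_ /andP[_ jn]] ij.
rewrite /= -!map_comp => _ /mapP[y y_in ->]; apply/negP => /mapP[z _] /=.
move=> /(congr1 (nth false ^~ i.+1)); rewrite !nth_part_starts ltnn ij subnn /=.
have [|_ _ _ _ start] := codes_ok _ y_in; first lia.
by rewrite -/(cstart y 0) start //; lia.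
Qed.

End Codes.

Section CodeOk.
Variables (b n : nat) (x : code).
Hypothesis x_ok : code_ok b 0 n x.

Lemma cblock_lt i : i < n -> cblock x i < n.
Proof. by case: x_ok => _ bnd _ _ _ /bnd[]. Qed.

Lemma cpos_lt i : i < n -> cpos x i < b.
Proof. by case: x_ok => _ bnd _ _ _ /bnd[]. Qed.

Lemma cblock_mono i j : i <= j -> j < n -> cblock x i <= cblock x j.
Proof.
case: x_ok => _ _ step _ _ ij; rewrite -(subnKC ij).
elim: (j - i) => [|d IH] jn; first by rewrite addn0.
rewrite addnS in jn *; apply: leq_trans (IH (ltnW jn)) _.
by move: (step _ jn); case: cstart => [/ltnW|[-> _]].
Qed.

End CodeOk.

(** * Counting induced subgraphs *)

Definition block_system (col : nat -> nat -> bool) K n b c (h : nat -> nat -> nat) :=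
  [/\ forall r p p', r < n -> p < p' < b -> h r p < h r p',
      forall r r' p p', r < r' < n -> p < b -> p' < b -> h r p < h r' p',
      forall r p, r < n -> p < b -> h r p < K,
      forall r r' p p', r < r' < n -> p < b -> p' < b -> col (h r p) (h r' p') = c
    & forall r, r < n -> col (h r 0) (h r b.-1) != c].

Definition code_vertex (h : nat -> nat -> nat) (x : code) i := h (cblock x i) (cpos x i).

Section BlockSystem.
Variables (col : nat -> nat -> bool) (K n b : nat) (c : bool) (h : nat -> nat -> nat).
Hypothesis hB : block_system col K n b c h.
Variable x : code.
Hypothesis x_ok : code_ok b 0 n x.

Lemma code_vertex_increasing : increasing_on n (code_vertex h x).
Proof.
case: hB => inc_in inc_across _ _ _; case: x_ok => _ _ step _ _.
apply: increasing_onS => i iSn; have in_ : i < n by apply: ltnW.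
rewrite /code_vertex; move: (step i iSn); case: cstart => [lt_blk|[<- lt_pos]].
  by apply: inc_across; rewrite ?lt_blk ?(cblock_lt x_ok) ?(cpos_lt x_ok).
by apply: inc_in; rewrite ?(cblock_lt x_ok) ?lt_pos ?(cpos_lt x_ok).
Qed.

Lemma code_vertex_lt i : i < n -> code_vertex h x i < K.
Proof.
by case: hB => _ _ bnd _ _ in_; apply: bnd; rewrite ?(cblock_lt x_ok) ?(cpos_lt x_ok).
Qed.

(* If [i] lies inside a part, the ends of that part straddle [i] and have colour [~~ c]. *)
Lemma cstart_code_vertex i : i < n ->
  cstart x i = [forall u : 'I_n, forall v : 'I_n,
                 (u < i <= v) ==> (col (code_vertex h x u) (code_vertex h x v) == c)].
Proof.
case: hB => _ _ _ cross xy; case: x_ok => _ _ step inner _ in_.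
case: (boolP (cstart x i)) => [start | /(inner i in_)[s [e [/andP[si ie] en se s0 eb]]]].
  apply/esym/forallP => u; apply/forallP => v; apply/implyP => /andP[ui iv].
  apply/eqP/cross; rewrite ?(cpos_lt x_ok) ?(cblock_lt x_ok) ?(leq_trans ui iv) //.
  rewrite andbT; have := step i.-1; rewrite prednK; last lia.
  rewrite start => /(_ in_) lt_blk.
  apply: leq_ltn_trans (cblock_mono x_ok (_ : u <= i.-1) _) _; [lia | lia |].
  exact: leq_trans lt_blk (cblock_mono x_ok iv (ltn_ord v)).
apply/esym/negbTE/forallP => /(_ (Ordinal (ltn_trans si in_))) /forallP /(_ (Ordinal en)).
rewrite /= si ie /code_vertex se s0 eb /=.
by move: (xy _ (cblock_lt x_ok en)) => /negbTE ->.
Qed.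

End BlockSystem.

Definition switching (col : nat -> nat -> bool) K n := exists (p q : nat -> nat) (i0 : nat),
  [/\ i0 < n, p i0 = q i0,
      forall i, i < n -> maxn (p i) (q i) < K,
      forall i j, i < j -> j < n -> maxn (p i) (q i) < minn (p j) (q j)
    & forall i, i < n -> i != i0 -> col (p i) (p i0) != col (q i) (p i0)].

Definition adj_at N (G : ograph N) (g : nat -> nat) u w := adjn G (g u) (g w).

Section Counting.
Variables (P : oproperty) (N : nat) (G : ograph N) (K : nat) (g : nat -> nat).
Arguments P : clear implicits.
Hypotheses (P_hereditary : hereditary P) (G_wf : wf_ograph G) (PG : P N G).
Hypotheses (g_inc : increasing_on K g) (g_lt : forall j, j < K -> g j < N).

Lemma card_members_of_maps (T : eqType) (xs : seq T) (v : T -> nat -> nat) n :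
  (forall x, x \in xs -> increasing_on n (v x) /\ forall i, i < n -> v x i < K) ->
  uniq [seq induced_by G n (g \o v x) | x <- xs] -> size xs <= #|members P n|.
Proof.
move=> v_ok uniq_xs; rewrite -(size_map (fun x => induced_by G n (g \o v x))) cardE.
apply: uniq_leq_size => // _ /mapP[x /v_ok[v_inc v_lt] ->]; rewrite mem_enum.
apply: induced_by_members => // [i j ij jn | i in_] /=; last exact/g_lt/v_lt.
by apply: g_inc (v_inc _ _ ij jn) _; apply: v_lt.
Qed.

Lemma card_members_switching n : switching (adj_at G g) K n -> 2 ^ n.-1 <= #|members P n|.
Proof.
case=> p [q [i0 [i0n pq0 pqK pq_sep pq_sw]]]; pose I0 : 'I_n := Ordinal i0n.
pose pick (S : {set 'I_n}) i := if [exists j in S, val j == i] then q i else p i.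
have pickE S (j : 'I_n) : pick S j = if j \in S then q j else p j.
  rewrite /pick; case: (boolP (j \in S)) => [jS | /negbTE jS].
    by rewrite ifT //; apply/existsP; exists j; rewrite jS eqxx.
  rewrite ifN //; apply/existsP => -[j' /andP[j'S /eqP/val_inj j'j]].
  by rewrite -j'j j'S in jS.
have pick_i0 S : pick S i0 = p i0 by rewrite /pick -pq0; case: ifP.
have flip S (j : 'I_n) : j != I0 ->
    adj_at G g (pick S j) (p i0) = (j \in S) (+) adj_at G g (p j) (p i0).
  move=> jI0; move: (pq_sw j (ltn_ord j) jI0); rewrite pickE.
  by case: (j \in S); case: adj_at; case: adj_at.
have -> : 2 ^ n.-1 = size (enum (powerset [set~ I0])).
  by rewrite -cardE card_powerset cardsC1 card_ord.
apply: (card_members_of_maps (v := pick)) => [S _ | ].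
  split=> [i j ij jn | i in_].
    by have := pq_sep i j ij jn; rewrite /pick; case: ifP; case: ifP; lia.
  by have := pqK i in_; rewrite /pick; case: ifP; lia.
rewrite map_inj_in_uniq ?enum_uniq // => S1 S2; rewrite !mem_enum !powersetE => sub1 sub2 eqG.
apply/setP => j; case: (eqVneq j I0) => [-> | jI0].
  have I0_notin (S : {set 'I_n}) : S \subset [set~ I0] -> I0 \notin S.
    by move=> sub; apply/negP => /(subsetP sub); rewrite !inE eqxx.
  by rewrite (negbTE (I0_notin _ sub1)) (negbTE (I0_notin _ sub2)).
have := congr1 (fun H => adjn H j I0) eqG; rewrite !adjn_induced_by jI0 /=.
by rewrite !pick_i0 -![adjn G _ _]/(adj_at G g _ _) !flip // => /addIb.
Qed.

Lemma card_members_block_system n b c h :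
  1 < b -> block_system (adj_at G g) K n b c h -> F n b <= #|members P n|.
Proof.
move=> b_ge2 hB; pose xs := codes b n n 0.
pose decode (H : ograph n) := [seq [forall u : 'I_n, forall v : 'I_n,
                                     (u < i <= v) ==> (adjn H u v == c)] | i <- iota 0 n].
have decodeK x : x \in xs -> decode (induced_by G n (g \o code_vertex h x)) = x.1.
  move=> /(codes_ok b_ge2 (leqnn n)) x_ok; have [size_x _ _ _ _] := x_ok.
  apply: (@eq_from_nth _ false); first by rewrite size_map size_iota size_x.
  move=> i; rewrite size_map size_iota => in_; rewrite (nth_map 0) ?size_iota // nth_iota //.
  rewrite add0n -/(cstart x i) (cstart_code_vertex hB x_ok in_).
  apply: eq_forallb => u; apply: eq_forallb => v; apply: implyb_id2l => /andP[ui iv].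
  by rewrite adjn_induced_by -val_eqE /= neq_ltn (leq_trans ui iv).
rewrite -(size_codes b_ge2 0 (leqnn n)); apply: (card_members_of_maps (v := code_vertex h)).
  move=> x /(codes_ok b_ge2 (leqnn n)) x_ok.
  split; [exact (code_vertex_increasing hB x_ok) | exact (code_vertex_lt hB x_ok)].
apply: (@map_uniq _ _ decode); rewrite -map_comp.
have /eq_in_map -> :
    {in xs, decode \o (fun x => induced_by G n (g \o code_vertex h x)) =1 fst}.
  by move=> x /decodeK.
exact: uniq_codes_starts.
Qed.

End Counting.

(** * Selecting blocks greedily *)

Lemma leq_wmul2r a a' M : a <= a' -> a * M <= a' * M.
Proof. by move=> aa'; rewrite leq_mul2r aa' orbT. Qed.

Lemma leq_block a a' M : a < a' -> a * M + M <= a' * M.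
Proof. by rewrite -mulSnr; apply: leq_wmul2r. Qed.

Definition constant_on (f : nat -> bool) lo hi :=
  all (fun u => f u == f lo) (index_iota lo hi).

Lemma constant_onP f lo hi u : constant_on f lo hi -> lo <= u < hi -> f u = f lo.
Proof. by move=> /allP f_const u_in; apply/eqP/f_const; rewrite mem_index_iota. Qed.

Lemma constant_on_sub f lo hi lo' hi' :
  constant_on f lo hi -> lo <= lo' -> hi' <= hi -> constant_on f lo' hi'.
Proof.
move=> f_const lo_le hi_le; apply/allP => u; rewrite mem_index_iota => u_in.
by rewrite !(constant_onP f_const) //; apply/andP; split; lia.
Qed.

Lemma not_constant_on f lo hi :
  ~~ constant_on f lo hi -> exists2 u, lo <= u < hi & f u != f lo.
Proof. by case/allPn => u; rewrite mem_index_iota; exists u. Qed.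

(* Each greedy step keeps one block and a [1/c] fraction of the later ones,
   where [c = n.-1 ^ M]; a run of [greedy_len c t] blocks survives [t] steps. *)
Definition greedy_len c t := iter t (fun x => (c * x).+1) 1.

Section Ramsey.
Variables (col : nat -> nat -> bool) (M n K : nat).
Hypotheses (colC : forall u w, col u w = col w u) (n_gt0 : 0 < n).

Lemma switching_or_constant_part w A m :
  w < A * M -> (A + n.-1 * m) * M <= K ->
  switching col K n \/
  exists2 i, i < n.-1 & constant_on (col w) ((A + i * m) * M) ((A + i.+1 * m) * M).
Proof.
move=> wA AK; pose lo i := (A + i * m) * M.
have lo_mono i j : i <= j -> lo i <= lo j.
  by move=> ij; rewrite leq_mul2r leq_add2l leq_mul2r ij !orbT.
have A_lo : A * M <= lo 0 by rewrite /lo mul0n addn0.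
have lo_K : lo n.-1 <= K := AK.
case: (boolP (has (fun i => constant_on (col w) (lo i) (lo i.+1)) (iota 0 n.-1))).
  by case/hasP => i; rewrite mem_iota => /andP[_ il] ?; right; exists i.
move=> /hasPn mixed; left.
have [U HU] : exists U, forall i, i < n.-1 ->
    lo i <= U i < lo i.+1 /\ col w (U i) != col w (lo i).
  apply: (functional_choice (fun i u => i < n.-1 ->
    lo i <= u < lo i.+1 /\ col w u != col w (lo i))) => i.
  case: (ltnP i n.-1) => [il | li]; last by exists 0 => il; lia.
  by have [u ? ?] := not_constant_on (mixed i (ltac:(rewrite mem_iota; lia))); exists u.
(* [w] plays [i0 = 0]; interval [i] offers its first vertex and [U i]. *)
exists (fun i => if i is i'.+1 then lo i' else w).
exists (fun i => if i is i'.+1 then U i' else w), 0.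
split=> // [[|i] in_ | [|i] [|j] // ij jn | [|i] // in_ _].
- by have := lo_mono 0 n.-1; rewrite maxnn; lia.
- by have := HU i (ltac:(lia)); have := lo_mono i.+1 n.-1; lia.
- by have := HU j (ltac:(lia)); have := lo_mono 0 j; lia.
- by have := HU i (ltac:(lia)); have := HU j (ltac:(lia)); have := lo_mono i.+1 j; lia.
- by have [_ ne] := HU i (ltac:(lia)); rewrite colC [col (U i) w]colC eq_sym.
Qed.

Lemma switching_or_constant_parts base q A m :
  base + q <= A * M -> (A + n.-1 ^ q * m) * M <= K ->
  switching col K n \/
  exists A', [/\ A <= A', A' + m <= A + n.-1 ^ q * m &
              forall j, j < q -> constant_on (col (base + j)) (A' * M) ((A' + m) * M)].
Proof.
elim: q A => [|q IHq] A baseA AK.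
  by right; exists A; rewrite expn0 mul1n.
set X := n.-1 ^ q * m; have eX : n.-1 ^ q.+1 * m = n.-1 * X by rewrite expnS mulnA.
rewrite eX in AK *.
have [sw | [i il i_const]] := @switching_or_constant_part (base + q) A X (ltac:(lia)) AK.
  by left.
have iX : i.+1 * X <= n.-1 * X := leq_wmul2r X il.
have lower : base + q <= (A + i * X) * M.
  by apply: leq_trans (leq_wmul2r _ (leq_addr _ _)); lia.
have upper : (A + i * X + X) * M <= K.
  by apply: leq_trans AK; apply: leq_wmul2r; rewrite -addnA -mulSnr leq_add2l.
have [sw | [A' [A1A' A'A1 consts]]] := IHq _ lower upper.
  by left.
right; exists A'; split=> [||j]; [lia | by move: A'A1; rewrite -addnA -mulSnr; lia |].
rewrite ltnS leq_eqVlt => /orP[/eqP -> | /consts //].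
by apply: constant_on_sub i_const _ _; apply: leq_wmul2r; move: A'A1; rewrite ?mulSnr; lia.
Qed.

Lemma greedy_blocks t L len :
  greedy_len (n.-1 ^ M) t <= len -> (L + len) * M <= K ->
  switching col K n \/
  exists J : nat -> nat,
    [/\ forall i, i <= t -> L <= J i < L + len, increasing_on t.+1 J &
        forall i u, i < t -> J i * M <= u < J i * M + M ->
          constant_on (col u) (J i.+1 * M) ((J t).+1 * M)].
Proof.
elim: t L len => [|t IHt] L len len_ge LK.
  by right; exists (fun=> L); split=> [i|i j|//]; move: len_ge; rewrite /greedy_len /=; lia.
set m := greedy_len (n.-1 ^ M) t; have m_len : (n.-1 ^ M * m).+1 <= len := len_ge.
have LM : L * M + M <= L.+1 * M by rewrite mulSn addnC.
have L1K : (L.+1 + n.-1 ^ M * m) * M <= K by apply: leq_trans LK; apply: leq_wmul2r; lia.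
have [sw | [A' [LA' A'L consts]]] := switching_or_constant_parts LM L1K.
  by left.
have A'K : (A' + m) * M <= K by apply: leq_trans LK; apply: leq_wmul2r; lia.
have [sw | [J [J_in J_inc J_const]]] := IHt A' m (leqnn m) A'K.
  by left.
right; exists (fun i => if i is i'.+1 then J i' else L); split.
- by move=> [|i] it; [|have := J_in i it]; lia.
- by apply: increasing_onS => -[|i] it; [have := J_in 0 isT | apply: J_inc]; lia.
move=> [|i] u // it u_in; last exact: J_const.
have /consts : u - L * M < M by lia.
rewrite subnKC; last lia.
move/constant_on_sub; apply; apply: leq_wmul2r.
  by have := J_in 0 isT; lia.
by have := J_in t (leqnn t); lia.
Qed.

End Ramsey.

Lemma nth_filter_iota (a : pred nat) s r : r < count a (iota 0 s) ->
  nth 0 (filter a (iota 0 s)) r < s /\ a (nth 0 (filter a (iota 0 s)) r).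
Proof.
rewrite -size_filter => r_lt; have := mem_nth 0 r_lt.
by rewrite mem_filter mem_iota => /andP[-> /andP[_ ->]].
Qed.

Lemma nth_filter_iota_increasing (a : pred nat) s m : m <= count a (iota 0 s) ->
  increasing_on m (nth 0 (filter a (iota 0 s))).
Proof.
rewrite -size_filter => m_le i j ij jm.
apply: (sorted_ltn_nth ltn_trans); rewrite ?inE //; try lia.
exact/sorted_filter/iota_ltn_sorted/ltn_trans.
Qed.

Definition alternating (col : nat -> nat -> bool) b k := forall j, j < k ->
  col (j * (2 * b)) (j * (2 * b) + b.-1) = ~~ col (j * (2 * b) + b) (j * (2 * b) + b + b.-1).

Section Selection.
Variables (col : nat -> nat -> bool) (M n K t : nat) (J : nat -> nat).
Hypotheses (M_gt0 : 0 < M) (J_inc : increasing_on t.+1 J) (J_K : (J t).+1 * M <= K).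
Hypothesis J_const : forall i u, i < t -> J i * M <= u < J i * M + M ->
  constant_on (col u) (J i.+1 * M) ((J t).+1 * M).

Let z := J t * M.

Definition mixed_block i := ~~ constant_on (col^~ z) (J i * M) (J i * M + M).

Definition uniform_block c i := ~~ mixed_block i && (col (J i * M) z == c).

Let z_K : z + M <= K.
Proof. by rewrite addnC -mulSn. Qed.

Let J_block i j : i < j -> j <= t -> J i * M + M <= J j * M.
Proof. by move=> ij jt; apply/leq_block/J_inc; lia. Qed.

Let J_le i j : i <= j -> j <= t -> J i <= J j.
Proof. by rewrite leq_eqVlt => /orP[/eqP -> // | ij jt]; apply/ltnW/J_inc. Qed.

Lemma switching_of_mixed : 0 < n -> n.-1 <= count mixed_block (iota 0 t) -> switching col K n.
Proof.
move=> n_gt0 many; pose f := nth 0 (filter mixed_block (iota 0 t)).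
have f_ok r : r < n.-1 -> f r < t /\ mixed_block (f r).
  by move=> rn; apply: nth_filter_iota; lia.
have f_inc : increasing_on n.-1 f := nth_filter_iota_increasing many.
have [U HU] : exists U, forall r, r < n.-1 ->
    J (f r) * M <= U r < J (f r) * M + M /\ col (U r) z != col (J (f r) * M) z.
  apply: (functional_choice (fun r u => r < n.-1 ->
    J (f r) * M <= u < J (f r) * M + M /\ col u z != col (J (f r) * M) z)) => r.
  case: (ltnP r n.-1) => [rn | ?]; last by exists 0 => ?; lia.
  by have [_ /not_constant_on[u ? ?]] := f_ok r rn; exists u.
(* Each mixed block offers two vertices of different colours towards the
   last block, which plays [i0 = n.-1]. *)
exists (fun r => if r < n.-1 then J (f r) * M else z).
exists (fun r => if r < n.-1 then U r else z), n.-1.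
have := z_K; split=> [||r rn|r r' rr' r'n|r rn rn1]; rewrite ?ltnn //; first lia.
- case: ifP => rn1; last lia.
  by have [fr _] := f_ok r rn1; have := HU r rn1; have := J_block fr (leqnn t); lia.
- have rn1 : r < n.-1 by lia.
  have [fr _] := f_ok r rn1; have := HU r rn1; rewrite rn1.
  case: ifP => r'n1; last by have := J_block fr (leqnn t); lia.
  have [fr' _] := f_ok r' r'n1; have := HU r' r'n1.
  by have := J_block (f_inc _ _ rr' r'n1) (ltnW fr'); lia.
- have rn1' : r < n.-1 by lia.
  by rewrite rn1' eq_sym; case: (HU r rn1').
Qed.

Variable b : nat.
Hypothesis M_eq : M = 2 * b.
Hypothesis J_alt : forall i, i < t ->
  col (J i * M) (J i * M + b.-1) = ~~ col (J i * M + b) (J i * M + b + b.-1).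

Lemma block_system_of_uniform c :
  n <= count (uniform_block c) (iota 0 t) -> exists h, block_system col K n b c h.
Proof.
move=> many; pose f := nth 0 (filter (uniform_block c) (iota 0 t)).
have f_ok r : r < n -> f r < t /\ uniform_block c (f r).
  by move=> rn; apply: nth_filter_iota (leq_trans rn many).
have f_inc : increasing_on n f := nth_filter_iota_increasing many.
have bbM : b + b = M by rewrite M_eq; lia.
(* In the double block [J (f r)] use the half whose end vertices have colour [~~ c]. *)
pose sel r := col (J (f r) * M) (J (f r) * M + b.-1) == c.
pose h r p := J (f r) * M + (if sel r then b else 0) + p.
have h_in r p : p < b -> J (f r) * M <= h r p < J (f r) * M + M.
  by rewrite /h; case: (sel r); lia.
exists h; split=> [r p p' rn /andP[pp' p'b] | r r' p p' /andP[rr' r'n] pb p'b |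
                   r p rn pb | r r' p p' /andP[rr' r'n] pb p'b | r rn].
- by rewrite /h; lia.
- have [fr' _] := f_ok r' r'n; have := J_block (f_inc _ _ rr' r'n) (ltnW fr').
  by have := h_in r p pb; have := h_in r' p' p'b; lia.
- have [fr _] := f_ok r rn; have := J_block fr (leqnn t).
  by have := h_in r p pb; lia.
- have [fr /andP[/negPn r_const /eqP r_col]] := f_ok r (ltn_trans rr' r'n).
  have [fr' _] := f_ok r' r'n.
  have Jrr' : J (f r).+1 <= J (f r') := J_le (f_inc _ _ rr' r'n) (ltnW fr').
  have u_const := J_const fr (h_in r p pb).
  rewrite (constant_onP u_const); last first.
    have := h_in r' p' p'b; have := J_block fr' (leqnn t); have := leq_wmul2r M Jrr'.
    by rewrite mulSn; lia.
  have z_in : J (f r).+1 * M <= z < (J t).+1 * M.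
    by rewrite mulSn /z; have := leq_wmul2r M (J_le fr (leqnn t)); lia.
  rewrite -(constant_onP u_const z_in) -r_col.
  exact: (constant_onP r_const (h_in r p pb)).
- have [fr _] := f_ok r rn.
  rewrite /h addn0; case sel_r: (sel r); rewrite ?addn0 /sel in sel_r *; last by rewrite sel_r.
  by move: sel_r; rewrite (J_alt fr); case: (col _ _) => /eqP <-.
Qed.

End Selection.

Lemma switching_or_block_system col b k n :
  (forall u w, col u w = col w u) -> 0 < b -> alternating col b k ->
  greedy_len (n.-1 ^ (2 * b)) (3 * n) <= k ->
  switching col (k * (2 * b)) n \/ exists c h, block_system col (k * (2 * b)) n b c h.
Proof.
move=> colC b_gt0 alt; case: n => [|n] k_ge.
  by right; exists true, (fun _ _ => 0); split=> *; lia.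
set M := 2 * b; set t := 3 * n.+1; have M_gt0 : 0 < M by rewrite /M; lia.
have [sw | [J [J_in J_inc J_const]]] :=
  @greedy_blocks col M n.+1 (k * M) colC (ltn0Sn n) t 0 k k_ge (leqnn _).
  by left.
have J_K : (J t).+1 * M <= k * M by apply: leq_wmul2r; have := J_in t (leqnn t); lia.
have J_alt i : i < t ->
    col (J i * M) (J i * M + b.-1) = ~~ col (J i * M + b) (J i * M + b + b.-1).
  by move=> it; apply: alt; have := J_in i (ltnW it); lia.
pose mixed := mixed_block col M t J; pose uniform := uniform_block col M t J.
case: (leqP n (count mixed (iota 0 t))) => [many | few].
  by left; apply: switching_of_mixed M_gt0 J_inc J_K (ltn0Sn n) many.
have [c many] : exists c, n.+1 <= count (uniform c) (iota 0 t).
  have count3 s : count (uniform true) s + count (uniform false) s + count mixed s = size s.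
    elim: s => //= i s <-; rewrite /uniform /uniform_block -/(mixed i).
    by case: (mixed i); case: (col _ _) => /=; lia.
  have := count3 (iota 0 t); rewrite size_iota.
  case: (leqP n.+1 (count (uniform true) (iota 0 t))) => ?.
    by exists true.
  by exists false; lia.
have [h hB] := block_system_of_uniform M_gt0 J_inc J_K J_const (erefl M) J_alt many.
by right; exists c, h.
Qed.

Lemma type3_alternating N (G : ograph N) k l : type3_structure G k l ->
  exists g, [/\ increasing_on (k * (2 * blk l)) g,
                forall j, j < k * (2 * blk l) -> g j < N
              & alternating (adj_at G g) (blk l) k].
Proof.
case=> g [g_inc [g_lt g_alt]]; set b := blk l in g_inc g_lt g_alt *.
have b_gt0 : 0 < b by rewrite /b /blk; lia.
have eK : 2 * k * b = k * (2 * b) by rewrite mulnCA mulnA.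
exists g; rewrite -eK; split=> // [|j jk]; first exact: increasing_onS.
have := g_alt (2 * j) (ltac:(lia)); rewrite /adj_at.
have -> : 2 * j * b = j * (2 * b) by rewrite mulnCA mulnA.
have -> : (2 * j).+1 * b = j * (2 * b) + b by rewrite mulSn mulnCA mulnA addnC.
by rewrite -!addnBA ?subn1.
Qed.

Theorem lemma6 (l : nat) (P : oproperty) :
  hereditary P ->
  (forall K : nat, exists k : nat, (K <= k)%N /\
     exists (n : nat) (G : ograph n),
       wf_ograph G /\ P n G /\ type3_structure G k l) ->
  forall n : nat, (F n l.+1 <= #|[set G : ograph n | wf_ograph G && P n G]|)%N.
Proof.
move=> P_hereditary large n; rewrite -/(members P n); set b := blk l.
apply: leq_trans (F_le_blk l n) _.
have [k [k_ge [N [G [G_wf [PG /type3_alternating[g [g_inc g_lt alt]]]]]]]] :=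
  large (greedy_len (n.-1 ^ (2 * b)) (3 * n)).
have b_gt1 : 1 < b by rewrite /b /blk leq_maxl.
have colC u w : adj_at G g u w = adj_at G g w u by apply: adjnC.
case: (switching_or_block_system colC (ltnW b_gt1) alt k_ge) => [sw | [c [h hB]]].
  exact: leq_trans (F_le_exp2 _ _) (card_members_switching P_hereditary G_wf PG g_inc g_lt sw).
exact: (card_members_block_system P_hereditary G_wf PG g_inc g_lt b_gt1 hB).
Qed.
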